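(* Let $n\ge1$. A temporal theory $\Gamma$ is $\mathrm{ITL}^{\mathrm{BD}_n}$-consistent if and only if $\Gamma$ is $\mathrm{LTL}$-consistent.
   Context: Fix a countable set $\mathbb{P}$ of atoms. Temporal formulas: $\varphi ::= p\mid\bot\mid\varphi\wedge\varphi\mid\varphi\vee\varphi\mid\varphi\to\varphi\mid\circ\varphi\mid\varphi\,\mathsf{U}\,\varphi\mid\varphi\,\mathsf{R}\,\varphi$. An intuitionistic temporal frame is $(W,\preccurlyeq,S)$ with $W\ne\emptyset$, $\preccurlyeq$ a partial order, $S:W\to W$ forward confluent ($w\preccurlyeq v\Rightarrow S(w)\preccurlyeq S(v)$); persistent if also backward confluent (if $S(w)=v\preccurlyeq u$ then some $t\succcurlyeq w$ has $S(t)=u$). A model adds $V:W\to2^{\mathbb{P}}$ monotone along $\preccurlyeq$. Satisfaction: atoms via $V$; $\bot$ never; $\wedge,\vee$ pointwise; $M,w\models\varphi\to\psi$ iff for all $v\succcurlyeq w$, $M,v\models\varphi$ implies $M,v\models\psi$; $\circ\varphi$ at $w$ iff $\varphi$ at $S(w)$; $\varphi\,\mathsf{U}\,\psi$: some $k\ge0$ with $\psi$ at $S^k(w)$ and $\varphi$ at $S^i(w)$ for all $0\le i<k$; $\varphi\,\mathsf{R}\,\psi$: for all $k\ge0$, $\psi$ at $S^k(w)$ or $\varphi$ at some $S^i(w)$, $0\le i<k$. Depth $\le n$: no chain of $n+1$ pairwise distinct $\preccurlyeq$-related worlds. $\mathrm{ITL}^{\mathrm{BD}_n}$-models are models on persistent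 frames of depth $\le n$; $\mathrm{LTL}$-models are $\mathrm{ITL}^{\mathrm{BD}_1}$-models (i.e. $\preccurlyeq$ is the identity). $\Gamma$ is $\mathsf{L}$-consistent if there exist an $\mathsf{L}$-model $M$ and a world $w$ with $M,w\models\gamma$ for all $\gamma\in\Gamma$. *)

From Stdlib Require Import Arith.

(* Atoms: the countable set P is represented by nat. *)
Inductive form : Type :=
| Var : nat -> form
| Bot : form
| And : form -> form -> form
| Or : form -> form -> form
| Imp : form -> form -> form
| Next : form -> form
| Until : form -> form -> form
| Release : form -> form -> form.

Record model : Type := {
  W : Type;
  le : W -> W -> Prop;
  S : W -> W;
  V : W -> nat -> Prop;
  W_inhabited : inhabited W;
  le_refl : forall w, le w w;
  le_trans : forall u v w, le u v -> le v w -> le u w;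
  le_antisym : forall u v, le u v -> le v u -> u = v;
  forward_confluent : forall w v, le w v -> le (S w) (S v);
  V_monotone : forall w v p, le w v -> V w p -> V v p
}.

Definition Siter (M : model) (k : nat) (w : W M) : W M := Nat.iter k (S M) w.

Fixpoint sat (M : model) (w : W M) (phi : form) {struct phi} : Prop :=
  match phi with
  | Var p => V M w p
  | Bot => False
  | And a b => sat M w a /\ sat M w b
  | Or a b => sat M w a \/ sat M w b
  | Imp a b => forall v, le M w v -> sat M v a -> sat M v b
  | Next a => sat M (S M w) a
  | Until a b => exists k, sat M (Siter M k w) b /\
                   forall i, i < k -> sat M (Siter M i w) a
  | Release a b => forall k, sat M (Siter M k w) b \/
                   exists i, i < k /\ sat M (Siter M i w) a
  end.

Definition persistent (M : model) : Prop :=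
  forall w u, le M (S M w) u -> exists t, le M w t /\ S M t = u.

(* Depth <= n: no chain of n+1 pairwise distinct, pairwise le-related worlds
   (indexed by 0..n). *)
Definition depth_le (M : model) (n : nat) : Prop :=
  ~ exists f : nat -> W M,
      (forall i j, i <= n -> j <= n -> i <> j -> f i <> f j) /\
      (forall i j, i <= n -> j <= n -> le M (f i) (f j) \/ le M (f j) (f i)).

Definition ITL_BD_model (n : nat) (M : model) : Prop :=
  persistent M /\ depth_le M n.

Definition LTL_model (M : model) : Prop := ITL_BD_model 1 M.

Definition theory := form -> Prop.

Definition ITL_BD_consistent (n : nat) (Gamma : theory) : Prop :=
  exists (M : model) (w : W M), ITL_BD_model n M /\
    forall g, Gamma g -> sat M w g.

Definition LTL_consistent (Gamma : theory) : Prop :=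
  exists (M : model) (w : W M), LTL_model M /\
    forall g, Gamma g -> sat M w g.

(* Truth is upward persistent, and in a frame of finite depth every world sees a
   maximal one, so a theory true at w is also true at a maximal world above w.
   Backward confluence makes the maximal worlds closed under S, and since nothing
   lies strictly above a maximal world, their inclusion, ordered discretely, is a
   bounded morphism and so preserves truth; this discrete submodel is an
   LTL-model.  Conversely an LTL-model has depth 1 <= n. *)
From Stdlib Require Import Arith Lia Classical.

Lemma Siter_succ (M : model) k w : Siter M (Datatypes.S k) w = S M (Siter M k w).
Proof. reflexivity. Qed.

Lemma Siter_le_compat (M : model) k w v :
  le M w v -> le M (Siter M k w) (Siter M k v).
Proof.
  intros Hwv; induction k as [|k IH]; [exact Hwv|].
  apply forward_confluent, IH.
Qed.

Lemma sat_le_mono (M : model) phi : forall w v,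
  le M w v -> sat M w phi -> sat M v phi.
Proof.
  induction phi as [p| |a IHa b IHb|a IHa b IHb|a _ b _|a IHa|a IHa b IHb|a IHa b IHb];
    intros w v Hwv; simpl.
  - apply V_monotone, Hwv.
  - trivial.
  - intros [Ha Hb]; split; [exact (IHa _ _ Hwv Ha)|exact (IHb _ _ Hwv Hb)].
  - intros [Ha|Hb]; [left; exact (IHa _ _ Hwv Ha)|right; exact (IHb _ _ Hwv Hb)].
  - intros Himp u Hvu. apply Himp. eapply le_trans; eassumption.
  - apply IHa, forward_confluent, Hwv.
  - intros [k [Hb Ha]]. exists k. split.
    + exact (IHb _ _ (Siter_le_compat M k w v Hwv) Hb).
    + intros i Hi. exact (IHa _ _ (Siter_le_compat M i w v Hwv) (Ha i Hi)).
  - intros Hrel k. destruct (Hrel k) as [Hb|[i [Hi Ha]]].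
    + left. exact (IHb _ _ (Siter_le_compat M k w v Hwv) Hb).
    + right. exists i. split; [exact Hi|].
      exact (IHa _ _ (Siter_le_compat M i w v Hwv) Ha).
Qed.

Section BoundedMorphism.

Variables N M : model.
Variable h : W N -> W M.
Hypothesis h_S : forall x, h (S N x) = S M (h x).
Hypothesis h_V : forall x p, V N x p <-> V M (h x) p.
Hypothesis h_forth : forall x y, le N x y -> le M (h x) (h y).
Hypothesis h_back : forall x u, le M (h x) u -> exists y, le N x y /\ h y = u.

Lemma bounded_morphism_Siter k x : h (Siter N k x) = Siter M k (h x).
Proof.
  induction k as [|k IH]; [reflexivity|].
  rewrite !Siter_succ, h_S, IH. reflexivity.
Qed.

Lemma sat_bounded_morphism phi : forall x, sat N x phi <-> sat M (h x) phi.
Proof.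
  induction phi as [p| |a IHa b IHb|a IHa b IHb|a IHa b IHb|a IHa|a IHa b IHb|a IHa b IHb];
    intros x; simpl.
  - apply h_V.
  - reflexivity.
  - rewrite IHa, IHb. reflexivity.
  - rewrite IHa, IHb. reflexivity.
  - split.
    + intros Himp u Hxu. destruct (h_back x u Hxu) as [y [Hxy <-]].
      rewrite <- IHa, <- IHb. apply Himp, Hxy.
    + intros Himp y Hxy. rewrite IHa, IHb. apply Himp, h_forth, Hxy.
  - rewrite <- h_S. apply IHa.
  - assert (Ha : forall i, sat N (Siter N i x) a <-> sat M (Siter M i (h x)) a)
      by (intro i; rewrite <- bounded_morphism_Siter; apply IHa).
    assert (Hb : forall k, sat N (Siter N k x) b <-> sat M (Siter M k (h x)) b)
      by (intro k; rewrite <- bounded_morphism_Siter; apply IHb).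
    firstorder.
  - assert (Ha : forall i, sat N (Siter N i x) a <-> sat M (Siter M i (h x)) a)
      by (intro i; rewrite <- bounded_morphism_Siter; apply IHa).
    assert (Hb : forall k, sat N (Siter N k x) b <-> sat M (Siter M k (h x)) b)
      by (intro k; rewrite <- bounded_morphism_Siter; apply IHb).
    firstorder.
Qed.

End BoundedMorphism.

Definition maximal (M : model) (v : W M) : Prop := forall u, le M v u -> u = v.

Lemma maximal_S (M : model) v : persistent M -> maximal M v -> maximal M (S M v).
Proof.
  intros HP Hv u Hu. destruct (HP v u Hu) as [t [Hvt <-]].
  rewrite (Hv t Hvt). reflexivity.
Qed.

Lemma strict_chain_above (M : model) w :
  (forall v, le M w v -> exists u, le M v u /\ u <> v) ->
  forall m, exists f : nat -> W M,
    (forall i, i <= m -> le M w (f i)) /\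
    (forall i j, i < j <= m -> le M (f i) (f j) /\ f i <> f j).
Proof.
  intros Hstep m. induction m as [|m [f [Habove Hchain]]].
  - exists (fun _ => w). split; [intros; apply le_refl|intros; lia].
  - destruct (Hstep (f m) (Habove m (le_n m))) as [u [Hmu Hneq]].
    exists (fun i => if i <=? m then f i else u). split.
    + intros i Hi. destruct (Nat.leb_spec i m); [apply Habove; lia|].
      eapply le_trans; [apply Habove, le_n|exact Hmu].
    + intros i j Hij. destruct (Nat.leb_spec i m); [|lia].
      destruct (Nat.leb_spec j m); [apply Hchain; lia|].
      assert (Him : le M (f i) (f m)).
      { destruct (Nat.eq_dec i m) as [->|]; [apply le_refl|apply Hchain; lia]. }
      split; [eapply le_trans; eassumption|].
      intros Hiu. rewrite Hiu in Him. apply Hneq, le_antisym; assumption.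
Qed.

Lemma depth_le_no_strict_chain (M : model) n (f : nat -> W M) :
  depth_le M n -> ~ (forall i j, i < j <= n -> le M (f i) (f j) /\ f i <> f j).
Proof.
  intros HD Hchain. apply HD. exists f. split.
  - intros i j Hi Hj Hij.
    destruct (Nat.lt_gt_cases i j) as [[Hlt|Hlt] _]; [exact Hij| |].
    + apply Hchain; lia.
    + intros Heq. apply (proj2 (Hchain j i (conj Hlt Hi))). symmetry; exact Heq.
  - intros i j Hi Hj. destruct (Nat.lt_total i j) as [Hlt|[<-|Hlt]].
    + left. apply Hchain; lia.
    + left. apply le_refl.
    + right. apply Hchain; lia.
Qed.

Lemma exists_maximal_above (M : model) n w :
  depth_le M n -> exists v, le M w v /\ maximal M v.
Proof.
  intros HD. apply NNPP. intros Hnone.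
  assert (Hstep : forall v, le M w v -> exists u, le M v u /\ u <> v).
  { intros v Hwv. apply NNPP. intros Hno. apply Hnone. exists v. split; [exact Hwv|].
    intros u Hvu. apply NNPP. intros Hneq. apply Hno. exists u. split; assumption. }
  destruct (strict_chain_above M w Hstep n) as [f [_ Hchain]].
  exact (depth_le_no_strict_chain M n f HD Hchain).
Qed.

Lemma depth_le_mono (M : model) m n : m <= n -> depth_le M m -> depth_le M n.
Proof.
  intros Hmn HD [f [Hdistinct Hcomparable]]. apply HD. exists f.
  split; intros; [apply Hdistinct|apply Hcomparable]; lia.
Qed.

Lemma discrete_LTL_model (M : model) :
  (forall u v, le M u v -> u = v) -> LTL_model M.
Proof.
  intros Hdiscrete. split.
  - intros w u Hu. exists w. split; [apply le_refl|apply Hdiscrete, Hu].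
  - intros [f [Hdistinct Hcomparable]]. apply (Hdistinct 0 1); try lia.
    destruct (Hcomparable 0 1) as [H01|H10]; try lia.
    + apply Hdiscrete, H01.
    + symmetry. apply Hdiscrete, H10.
Qed.

Section MaximalSubmodel.

Variable M : model.
Hypothesis HP : persistent M.
Variable v0 : W M.
Hypothesis v0_maximal : maximal M v0.

Definition maximal_world : Type := { v : W M | maximal M v }.

Definition maximal_S_world (x : maximal_world) : maximal_world :=
  exist _ (S M (proj1_sig x)) (maximal_S M _ HP (proj2_sig x)).

Definition maximal_submodel : model := {|
  W := maximal_world;
  le := @eq maximal_world;
  S := maximal_S_world;
  V := fun x p => V M (proj1_sig x) p;
  W_inhabited := inhabits (exist _ v0 v0_maximal);
  le_refl := @eq_refl maximal_world;
  le_trans := fun u v w (Huv : u = v) (Hvw : v = w) => eq_trans Huv Hvw;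
  le_antisym := fun u v (Huv : u = v) _ => Huv;
  forward_confluent := fun u v (Huv : u = v) => f_equal maximal_S_world Huv;
  V_monotone := fun u v p (Huv : u = v) (Hu : V M (proj1_sig u) p) =>
    eq_ind u (fun x => V M (proj1_sig x) p) Hu v Huv
|}.

Lemma maximal_submodel_LTL : LTL_model maximal_submodel.
Proof. apply discrete_LTL_model. trivial. Qed.

Lemma sat_maximal_submodel phi (x : maximal_world) :
  sat maximal_submodel x phi <-> sat M (proj1_sig x) phi.
Proof.
  apply (sat_bounded_morphism maximal_submodel M (@proj1_sig _ _)).
  - reflexivity.
  - reflexivity.
  - intros y z <-. apply le_refl.
  - intros y u Hyu. exists y. split; [reflexivity|].
    symmetry. exact (proj2_sig y u Hyu).
Qed.

End MaximalSubmodel.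

Theorem lemma4p6 (n : nat) (Gamma : theory) :
  1 <= n -> (ITL_BD_consistent n Gamma <-> LTL_consistent Gamma).
Proof.
  intros Hn. split.
  - intros [M [w [[HP HD] HGamma]]].
    destruct (exists_maximal_above M n w HD) as [v [Hwv Hv]].
    exists (maximal_submodel M HP v Hv), (exist _ v Hv).
    split; [apply maximal_submodel_LTL|].
    intros g Hg. apply sat_maximal_submodel. exact (sat_le_mono M g w v Hwv (HGamma g Hg)).
  - intros [M [w [[HP HD] HGamma]]]. exists M, w.
    split; [split; [exact HP|exact (depth_le_mono M 1 n Hn HD)]|exact HGamma].
Qed.
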